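(* Assume that $\Gamma_1$ and $\Gamma_2$ are regular inhomogeneous $Y$-semigroups and that $A_{\Gamma_1}(t)f=A_{\Gamma_2}(t)f$ for all $f \in Y_1$ and all $t \in J$. Then $\Gamma_1(s,t)f=\Gamma_2(s,t)f$ for all $f \in Y_1$ and all $(s,t) \in \Delta_J$. In particular, if $Y_1$ is dense in $Y$, then $\Gamma_1$ and $\Gamma_2$ agree on $Y$.
   Context: Let $(Y,\|\cdot\|)$ be a real separable Banach space and $(Y_1,\|\cdot\|_{Y_1})$ a real separable Banach space continuously embedded in $Y$. $J$ is either $\mathbb{R}^+$ or $[0,T_\infty]$ ($T_\infty>0$), $\Delta_J=\{(s,t)\in J^2:s\le t\}$, $J(s)=\{t\in J:t\ge s\}$. An inhomogeneous $Y$-semigroup is a map $\Gamma:\Delta_J\to\mathcal B(Y)$ with $\Gamma(t,t)=I$ and $\Gamma(s,r)\Gamma(r,t)=\Gamma(s,t)$ for $s\le r\le t$. Generator: for $t\in J$, $\mathcal D(A_\Gamma(t))$ is the set of $f\in Y$ such that $\lim_{h\downarrow0,\,t+h\in J}h^{-1}(\Gamma(t,t+h)-I)f$ and $\lim_{h\downarrow0,\,t-h\in J}h^{-1}(\Gamma(t-h,t)-I)f$ exist in $Y$ and are equal, $A_\Gamma(t)f$ being the common value; $\mathcal D(A_\Gamma)=\bigcap_t\mathcal D(A_\Gamma(t))$. $\Gamma$ is regular if: $Y_1\subseteq\mathcal D(A_\Gamma)$; $\Gamma(s,t)Y_1\subseteq Y_1$ for all $(s,t)\in\Delta_J$ and for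 every $f\in Y_1$, $t\in J$, $u\mapsto\Gamma(u,t)f$ is $\|\cdot\|_{Y_1}$-continuous on $\{u\in J:u\le t\}$; for every $f\in Y$, $s\in J$, $u\mapsto\Gamma(s,u)f$ is continuous from $J(s)$ into $Y$; and for all $(s,t)\in\Delta_J$, $f\in Y_1$, $u\mapsto\Gamma(s,u)A_\Gamma(u)f$ is Bochner integrable on $[s,t]$. *)

From HB Require Import structures.
From mathcomp Require Import all_boot all_order all_algebra.
From mathcomp Require Import all_classical all_reals all_analysis.
Set Implicit Arguments. Unset Strict Implicit. Unset Printing Implicit Defensive.
Import Order.TTheory GRing.Theory Num.Theory.
Import numFieldNormedType.Exports.
Local Open Scope classical_set_scope.
Local Open Scope ring_scope.

Definition separable (T : topologicalType) : Prop :=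
  exists D : set T, countable D /\ closure D = setT.

Definition time_set (R : realType) (J : set R) : Prop :=
  J = [set x | 0 <= x] \/ exists T : R, 0 < T /\ J = [set x | 0 <= x <= T].

Section Semigroups.
Variables (R : realType) (Y : normedModType R).

Definition bounded_linear (L : Y -> Y) : Prop :=
  (forall (a : R) (x y : Y), L (a *: x + y) = a *: L x + L y) /\ continuous L.

(* inhomogeneous Y-semigroup indexed by Delta_J (values off Delta_J irrelevant) *)
Definition inh_semigroup (J : set R) (G : R -> R -> Y -> Y) : Prop :=
  [/\ forall s t, J s -> J t -> s <= t -> bounded_linear (G s t),
      forall t, J t -> G t t = id
    & forall s r t, J s -> J r -> J t -> s <= r -> r <= t ->
        forall f, G s r (G r t f) = G s t f].

(* "A_G(t) f = g": both one-sided difference quotients (with h > 0 and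
   t+h in J, resp. t-h in J) converge to g.  When one of these filters is
   empty (t an endpoint of J) that condition is vacuous. *)
Definition is_generator_value (J : set R) (G : R -> R -> Y -> Y)
    (t : R) (f g : Y) : Prop :=
  J t /\
  ((fun h : R => h^-1 *: (G t (t + h) f - f))
     @ within (fun h : R => J (t + h)) (0 : R)^'+ --> g) /\
  ((fun h : R => h^-1 *: (G (t - h) t f - f))
     @ within (fun h : R => J (t - h)) (0 : R)^'+ --> g).

Definition gen_domain (J : set R) (G : R -> R -> Y -> Y) (t : R) : set Y :=
  [set f | exists g, is_generator_value J G t f g].

Definition generator (J : set R) (G : R -> R -> Y -> Y) (t : R) (f : Y) : Y :=
  xget 0 (is_generator_value J G t f).

Definition simple_fun (s : R -> Y) : Prop :=
  exists (n : nat) (A : 'I_n -> set R) (v : 'I_n -> Y),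
    (forall i, measurable (A i)) /\
    forall x, s x = \sum_(i < n) (\1_(A i) x : R) *: v i.

Definition bochner_integrable (D : set R) (g : R -> Y) : Prop :=
  (exists u : nat -> R -> Y, (forall n, simple_fun (u n)) /\
     {ae (@lebesgue_measure R), forall x, D x -> u n x @[n --> \oo] --> g x}) /\
  (\int[@lebesgue_measure R]_(x in D) (`|g x| : R)%:E < +oo)%E.

End Semigroups.

Definition regular (R : realType) (Y Y1 : normedModType R) (i : Y1 -> Y)
    (J : set R) (G : R -> R -> Y -> Y) : Prop :=
  [/\ forall f : Y1, forall t, J t -> gen_domain J G t (i f),
      forall s t, J s -> J t -> s <= t ->
        forall f : Y1, exists f' : Y1, i f' = G s t (i f),
      forall (f : Y1) t, J t ->
        exists g : R -> Y1,
          (forall u, J u -> u <= t -> i (g u) = G u t (i f)) /\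
          {within [set u | J u /\ u <= t], continuous g},
      forall (f : Y) s, J s ->
        {within [set u | J u /\ s <= u], continuous (fun u => G s u f)}
    & forall s t, J s -> J t -> s <= t -> forall f : Y1,
        bochner_integrable `[s, t] (fun u => G s u (generator J G u (i f)))].

(* For f in Y1 and s <= t, the interpolant phi u = G1(s,u) G2(u,t) f joins
   phi s = G2(s,t) f to phi t = G1(s,t) f.  Since G2(u,t) f stays in Y1 and
   moves Y1-continuously with u, phi is right continuous.  Writing
   phi u - phi (u - h) = G1(s,u-h) (G1(u-h,u) - G2(u-h,u)) G2(u,t) f, the
   equality of the generators on Y1, together with a bound on the norms of
   G1(s,v) for v in [s,t] that is uniform by Banach-Steinhaus, shows that the
   left derivative of phi vanishes; such a function is constant, by real
   induction.  Agreement on Y then follows by continuity when Y1 is dense. *)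

From HB Require Import structures.
From mathcomp Require Import all_boot all_order all_algebra.
From mathcomp Require Import all_classical all_reals all_analysis.
From mathcomp Require Import lra.
Import Order.TTheory GRing.Theory Num.Theory.
Import numFieldNormedType.Exports.
Local Open Scope classical_set_scope.
Local Open Scope ring_scope.
Set Implicit Arguments. Unset Strict Implicit. Unset Printing Implicit Defensive.

Section LinearBounds.
Variables (R : realType) (V W : normedModType R).

Definition linear_pack (L : V -> W) (hL : linear L) : {linear V -> W} :=
  HB.pack L (GRing.isLinear.Build _ _ _ _ _ hL).

Lemma linear_unit_ball_bound (f : {linear V -> W}) M :
  (forall x, `|x| <= 1 -> `|f x| <= M) -> forall x, `|f x| <= M * `|x|.
Proof.
move=> hM x; have [->|x0] := eqVneq x 0; first by rewrite linear0 !normr0 mulr0.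
have nx : 0 < `|x| by rewrite normr_gt0.
have := hM (`|x|^-1 *: x); rewrite linearZ !normrZ normfV normr_id mulVf ?gt_eqF//.
by rewrite lexx => /(_ isT); rewrite ler_pdivrMl// mulrC.
Qed.

Lemma continuous_linear_norm_le (f : {linear V -> W}) : continuous f ->
  exists2 C, 0 < C & forall x, `|f x| <= C * `|x|.
Proof.
move=> /(_ 0) /continuous_linear_bounded /linear_boundedP.
by move=> /pinfty_ex_gt0 [C C0 hC]; exists C.
Qed.

End LinearBounds.

Section UniformBoundedness.
Variables (R : realType) (V : completeNormedModType R) (W : normedModType R).

Lemma Banach_Steinhauss_norm (F : set (V -> W)) :
  (forall f, F f -> linear f /\ continuous f) -> pointwise_bounded F ->
  exists2 M, 0 <= M & forall f, F f -> forall x, `|f x| <= M * `|x|.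
Proof.
move=> hF hpt; have [|M hM] := Banach_Steinhauss _ hpt 1.
  move=> f /hF [lf cf]; split => // r.
  have [C C0 hC] := @continuous_linear_norm_le _ _ _ (linear_pack lf) cf.
  by exists (C * r) => x xr; rewrite (le_trans (hC x)) // ler_wpM2l // ltW.
exists `|M| => // f Ff x.
have [lf _] := hF f Ff.
apply: (le_trans (@linear_unit_ball_bound _ _ _ (linear_pack lf) _ _ x)).
  by move=> y y1; apply: hM.
by rewrite ler_wpM2r ?real_ler_norm ?num_real.
Qed.

End UniformBoundedness.

Section RealInduction.
Variable R : realType.

Lemma real_induction (P : R -> Prop) (a b : R) : a <= b -> P a ->
  (forall c, a < c <= b -> (forall y, a <= y < c -> P y) -> P c) ->
  (forall c, a <= c < b -> (forall y, a <= y <= c -> P y) ->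
     exists2 d, 0 < d & forall y, c < y < c + d -> y <= b -> P y) ->
  P b.
Proof.
move=> ab Pa closedP stepP.
pose T := [set x | a <= x <= b /\ forall y, a <= y <= x -> P y].
have Ta : T a.
  split=> [|y /andP[ay ya]]; first by rewrite lexx.
  by have -> : y = a by apply/le_anti; rewrite ay ya.
have hT : has_sup T by split; [exists a | exists b => x [/andP[_]]].
pose c := sup T.
have ac : a <= c by exact: sup_upper_bound.
have cb : c <= b by apply: ge_sup; [exists a | move=> x [/andP[_]]].
have below_c y : a <= y < c -> P y.
  move=> /andP[ay yc]; have cy0 : 0 < c - y by rewrite subr_gt0.
  have [x [_ Tx] yx] := sup_adherent cy0 hT.
  by apply: Tx; rewrite ay /=; rewrite /c in yx; lra.
have Tc : T c.
  split=> [|y /andP[ay yc]]; first by rewrite ac cb.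
  have [yc'|cy] := ltP y c; first by apply: below_c; rewrite ay yc'.
  have <- : c = y by apply/le_anti; rewrite yc cy.
  have [<-//|ac'] := eqVneq a c.
  by apply: closedP below_c; rewrite lt_neqAle ac' ac cb.
have [cb'|bc] := ltP c b; last first.
  have <- : c = b by apply/le_anti; rewrite cb bc.
  by apply: Tc.2; rewrite ac lexx.
have [d d0 Pd] := stepP c ltac:(by rewrite ac cb') Tc.2.
pose x := Num.min (c + d / 2) b.
have cx : c < x by rewrite lt_min cb' ltrDl divr_gt0.
suff /(sup_upper_bound hT) : T x by rewrite -/c; lra.
split=> [|y /andP[ay yx]]; first by rewrite (le_trans ac (ltW cx)) ge_min lexx orbT.
have [yc|cy] := leP y c; first by apply: Tc.2; rewrite ay yc.
apply: Pd; rewrite ?cy /=; move: yx; rewrite le_min => /andP[? ?] //; lra.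
Qed.

Lemma eq_of_zero_left_derivative (V : normedModType R) (phi : R -> V) a b :
  a <= b ->
  (forall c, a <= c < b -> forall e, 0 < e -> exists2 d, 0 < d &
     forall v, c < v < c + d -> v <= b -> `|phi v - phi c| <= e) ->
  (forall u, a < u <= b -> forall e, 0 < e -> exists2 d, 0 < d &
     forall h, 0 < h < d -> a <= u - h -> `|phi u - phi (u - h)| <= e * h) ->
  phi a = phi b.
Proof.
move=> ab right_cont left_deriv.
suff small e : 0 < e -> `|phi b - phi a| <= e * (b - a).
  apply/esym/eqP; rewrite -subr_eq0 -normr_le0; apply/ler_addgt0Pr => e e0.
  have ba : 0 <= b - a by rewrite subr_ge0.
  rewrite add0r (le_trans (small (e / (b - a + 1)) _)) ?divr_gt0 ?ltr_wpDl//.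
  by rewrite mulrAC ler_pdivrMr ?ltr_wpDl// ler_pM2l//; lra.
move=> e0; pose good y := `|phi b - phi (b - y)| <= e * y.
suff : good (b - a) by rewrite /good opprB addrCA subrr addr0.
apply: (@real_induction good 0 (b - a)); first by rewrite subr_ge0.
- by rewrite /good subr0 subrr normr0 mulr0.
- move=> c /andP[c0 cba] below_c; apply/ler_addgt0Pr => eps eps0.
  have [|d d0 hd] := right_cont (b - c) _ eps eps0; first by apply/andP; lra.
  pose y := c - Num.min d c / 2.
  have m0 : 0 < Num.min d c by rewrite lt_min d0 c0.
  have [mc md] : Num.min d c <= c /\ Num.min d c <= d by rewrite !ge_min !lexx orbT.
  have gy : good y by apply: below_c; apply/andP; rewrite /y; lra.
  have := hd (b - y); rewrite /y => /(_ ltac:(apply/andP; lra) ltac:(lra)) hv.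
  rewrite /good -(subrK (phi (b - y)) (phi b)) -addrA.
  by rewrite (le_trans (ler_normD _ _)) // lerD // (le_trans gy) // ler_pM2l // /y; lra.
- move=> c /andP[c0 cba] upto_c.
  have [|d d0 hd] := left_deriv (b - c) _ e e0; first by apply/andP; lra.
  exists d => // y /andP[cy ycd] yba.
  have := hd (y - c) ltac:(apply/andP; lra) ltac:(lra).
  rewrite opprB addrA subrK => hk.
  rewrite /good -(subrK (phi (b - c)) (phi b)) -addrA.
  have -> : e * y = e * c + e * (y - c) by rewrite mulrBr addrC subrK.
  by rewrite (le_trans (ler_normD _ _)) // lerD //; apply: upto_c; rewrite c0 lexx.
Qed.

End RealInduction.

Section RealFacts.
Variable R : realType.

Lemma mul_div_addr1_le (M e : R) : 0 <= M -> 0 <= e -> M * (e / (M + 1)) <= e.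
Proof.
move=> M0 e0; rewrite mulrCA ler_piMr // ler_pdivrMr ?ltr_wpDl //; lra.
Qed.

Lemma within_continuous_dist_lt (V : normedModType R) (A : set R)
    (f : R -> V) c e :
  {within A, continuous f} -> A c -> 0 < e ->
  exists2 d, 0 < d & forall v, `|c - v| < d -> A v -> `|f c - f v| < e.
Proof.
move=> /subspace_continuousP /(_ c) fc Ac e0.
have /cvgrPdist_lt /(_ e e0) /nbhs_ballP [d /= d0 hd] := fc Ac.
by exists d => // v cv Av; apply: hd.
Qed.

Lemma near_within_right0 (B : set R) (P : R -> Prop) :
  (\forall h \near within B (0 : R)^'+, P h) ->
  exists2 d, 0 < d & forall h, 0 < h < d -> B h -> P h.
Proof.
move=> /nbhs_ballP [d /= d0 hd]; exists d => // h /andP[h0 hd'] Bh.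
by apply: hd => //; rewrite -ball_normE /ball_ /= sub0r normrN gtr0_norm.
Qed.

Lemma continuous_eq_on_dense (T : topologicalType) (V : normedModType R)
    (A : set T) (f g : T -> V) : continuous f -> continuous g ->
  closure A = setT -> (forall x, A x -> f x = g x) -> f = g.
Proof.
move=> cf cg dA fg; apply/funext => x.
pose S := (fun x => `|f x - g x|) @^-1` [set 0 : R].
have cS : closed S.
  apply: preimage_closed => [y _|]; last exact: closed_eq.
  exact: cvg_norm (continuousB (cf y) (cg y)).
have AS : A `<=` S by move=> y /fg; rewrite /S /= => ->; rewrite subrr normr0.
have /(closureS AS) : closure A x by rewrite dA.
rewrite -(proj1 (closure_id S) cS) /S /= => /eqP.
by rewrite normr_eq0 subr_eq0 => /eqP.
Qed.

End RealFacts.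

Section SemigroupBounds.
Variable R : realType.

Lemma time_set_is_interval (J : set R) : time_set J -> is_interval J.
Proof.
case=> [->|[T [_ ->]]] x y /= Jx Jy z /andP[xz zy]; first lra.
by move: Jx Jy => /andP[? ?] /andP[? ?]; apply/andP; split; lra.
Qed.

Lemma bounded_linearB (V : normedModType R) (L : V -> V) : bounded_linear L ->
  forall x y, L (x - y) = L x - L y.
Proof. by move=> [lL _]; exact: (linearB (linear_pack lL)). Qed.

Lemma inh_semigroup_uniform_bound (Y : completeNormedModType R)
    (J : set R) (G : R -> R -> Y -> Y) :
  time_set J -> inh_semigroup J G ->
  (forall (f : Y) s, J s ->
     {within [set u | J u /\ s <= u], continuous (fun u => G s u f)}) ->
  forall s t, J s -> J t -> s <= t ->
  exists2 M, 0 <= M & forall v, s <= v <= t -> forall x, `|G s v x| <= M * `|x|.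
Proof.
move=> /time_set_is_interval hJ [hlin _ _] hcont s t Js Jt st.
have Jv v : s <= v <= t -> J v by exact: hJ.
have [|y|M M0 hM] := @Banach_Steinhauss_norm _ _ _ ((fun v => G s v) @` `[s, t]).
- move=> L [v]; rewrite set_itvE => /andP[sv vt] <-.
  by apply: hlin => //; apply: Jv; rewrite sv vt.
- have : compact ((fun v => G s v y) @` `[s, t]).
    apply: continuous_compact; last exact: segment_compact.
    apply: continuous_subspaceW (hcont y s Js) => u.
    by rewrite set_itvE => /andP[su ut]; split => //; apply: Jv; rewrite su ut.
  move=> /compact_bounded [N [_ hN]]; exists (N + 1) => _ [v sv <-].
  by apply: (hN (N + 1)); [rewrite ltrDl | exists v].
- by exists M => // v svt x; apply: hM; exists v; rewrite ?set_itvE.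
Qed.

End SemigroupBounds.

Section RegularSemigroups.
Variables (R : realType) (Y Y1 : completeNormedModType R) (i : Y1 -> Y).
Variable J : set R.
Hypotheses (i_cont : continuous i) (hJ : time_set J).

Lemma regular_backward_continuous (G : R -> R -> Y -> Y) (f : Y1) t :
  regular i J G -> J t ->
  {within [set u | J u /\ u <= t], continuous (fun u => G u t (i f))}.
Proof.
move=> [_ _ hg _ _] Jt; have [g [hgi gc]] := hg f t Jt.
apply: (@subspace_eq_continuous _ _ _ (i \o g)).
  by move=> u /set_mem [Ju ut]; exact: hgi.
by apply: within_continuous_comp => // y _; exact: i_cont.
Qed.

Variables (G1 G2 : R -> R -> Y -> Y).
Hypotheses (hG1 : inh_semigroup J G1) (hG2 : inh_semigroup J G2).
Hypotheses (hreg1 : regular i J G1) (hreg2 : regular i J G2).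
Hypothesis hA : forall (f : Y1) t, J t ->
  generator J G1 t (i f) = generator J G2 t (i f).

Lemma backward_differences_close (w : Y1) u e : J u -> 0 < e ->
  exists2 d, 0 < d & forall h, 0 < h < d -> J (u - h) ->
    `|G1 (u - h) u (i w) - G2 (u - h) u (i w)| <= e * h.
Proof.
move=> Ju e0; have [dom1 _ _ _ _] := hreg1; have [dom2 _ _ _ _] := hreg2.
have [_ [_ q1]] := xgetPex 0 (dom1 w u Ju).
have [_ [_ q2]] := xgetPex 0 (dom2 w u Ju).
rewrite -/(generator J G1 u (i w)) in q1.
rewrite -/(generator J G2 u (i w)) -hA // in q2.
have e20 : 0 < e / 2 by rewrite divr_gt0.
move/cvgrPdist_lt: q1 => /(_ _ e20) n1; move/cvgrPdist_lt: q2 => /(_ _ e20) n2.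
have [d d0 hd] := near_within_right0 (filterI n1 n2).
exists d => // h hd' Juh; have [n1h n2h] := hd h hd' Juh.
have h0 : 0 < h by case/andP: hd'.
set g := generator J G1 u (i w) in n1h n2h *.
set a := G1 (u - h) u (i w) in n1h *; set b := G2 (u - h) u (i w) in n2h *.
have -> : a - b = h *: ((g - h^-1 *: (b - i w)) - (g - h^-1 *: (a - i w))).
  rewrite [X in h *: X](_ : _ = h^-1 *: (a - b)).
    by rewrite scalerA mulfV ?gt_eqF // scale1r.
  by rewrite opprB addrC addrA subrK -scalerBr opprB addrA subrK.
rewrite normrZ gtr0_norm // mulrC ler_pM2r // (splitr e).
by rewrite (le_trans (ler_normB _ _)) // lerD // ltW.
Qed.

Section Interpolant.
Variables (f : Y1) (s t M : R).
Hypotheses (Js : J s) (Jt : J t) (M0 : 0 <= M).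
Hypothesis hM : forall v, s <= v <= t -> forall x, `|G1 s v x| <= M * `|x|.

Let phi u := G1 s u (G2 u t (i f)).

Let J_between v : s <= v <= t -> J v.
Proof. exact: time_set_is_interval. Qed.

Lemma interpolant_right_continuous c : s <= c < t ->
  forall e, 0 < e -> exists2 d, 0 < d &
    forall v, c < v < c + d -> v <= t -> `|phi v - phi c| <= e.
Proof.
move=> /andP[sc ct] e e0; have Jc : J c by apply: J_between; rewrite sc ltW.
have [[lin1 _ _] [_ _ _ cont1 _]] := (hG1, hreg1).
have e20 : 0 < e / 2 by rewrite divr_gt0.
have e10 : 0 < e / 2 / (M + 1) by rewrite divr_gt0 // ltr_wpDl.
have [d1 d10 hd1] := within_continuous_dist_lt
  (@regular_backward_continuous G2 f t hreg2 Jt) (conj Jc (ltW ct)) e10.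
have [d2 d20 hd2] := within_continuous_dist_lt
  (cont1 (G2 c t (i f)) s Js) (conj Jc sc) e20.
exists (Num.min d1 d2) => [|v /andP[cv vcd] vt]; first by rewrite lt_min d10 d20.
have sv : s <= v by rewrite (le_trans sc) // ltW.
have Jv : J v by apply: J_between; rewrite sv vt.
have [cvd1 cvd2] : `|c - v| < d1 /\ `|c - v| < d2.
  have [md1 md2] : Num.min d1 d2 <= d1 /\ Num.min d1 d2 <= d2.
    by rewrite !ge_min !lexx orbT.
  by rewrite distrC gtr0_norm ?subr_gt0 //; lra.
rewrite /phi -[X in X - _](subrK (G1 s v (G2 c t (i f)))) -addrA.
rewrite -bounded_linearB; last exact: lin1.
rewrite (splitr e) (le_trans (ler_normD _ _)) // lerD //.
  rewrite (le_trans (hM _ _)) ?sv // distrC.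
  by rewrite (le_trans _ (mul_div_addr1_le M0 (ltW e20))) // ler_wpM2l // ltW // hd1.
by rewrite distrC ltW // hd2.
Qed.

Lemma interpolant_zero_left_derivative u : s < u <= t ->
  forall e, 0 < e -> exists2 d, 0 < d &
    forall h, 0 < h < d -> s <= u - h -> `|phi u - phi (u - h)| <= e * h.
Proof.
move=> /andP[su ut] e e0; have Ju : J u by apply: J_between; rewrite ltW.
have [[lin1 _ comp1] [_ _ comp2]] := (hG1, hG2).
have [_ inv2 _ _ _] := hreg2; have [w hw] := inv2 u t Ju Jt ut f.
have e10 : 0 < e / (M + 1) by rewrite divr_gt0 // ltr_wpDl.
have [d d0 hd] := backward_differences_close w Ju e10.
exists d => // h hd' suh; have h0 : 0 < h by case/andP: hd'.
have Juh : J (u - h) by apply: J_between; rewrite suh; lra.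
have uhu : u - h <= u by lra.
rewrite /phi -(comp2 (u - h) u t) // -hw -(comp1 s (u - h) u) // -bounded_linearB.
  rewrite (le_trans (hM _ _)) ?suh //=; first lra.
  apply: le_trans (ler_wpM2l M0 (hd h hd' Juh)) _.
  rewrite mulrA ler_wpM2r ?(ltW h0) //.
  exact: mul_div_addr1_le (ltW e0).
exact: lin1.
Qed.

End Interpolant.

Lemma regular_semigroups_agree (f : Y1) s t : J s -> J t -> s <= t ->
  G1 s t (i f) = G2 s t (i f).
Proof.
move=> Js Jt st; have [_ id1 _] := hG1; have [_ id2 _] := hG2.
have [_ _ _ cont1 _] := hreg1.
have [M M0 hM] := inh_semigroup_uniform_bound hJ hG1 cont1 Js Jt st.
have := eq_of_zero_left_derivative st
  (interpolant_right_continuous f Js Jt M0 hM)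
  (interpolant_zero_left_derivative f Js Jt M0 hM).
by rewrite id1 // id2.
Qed.

End RegularSemigroups.

Theorem corollary2p11 (R : realType)
  (Y Y1 : completeNormedModType R) (i : Y1 -> Y)
  (hY : separable Y) (hY1 : separable Y1)
  (hi_lin : forall (a : R) (x y : Y1), i (a *: x + y) = a *: i x + i y)
  (hi_inj : injective i) (hi_cont : continuous i)
  (J : set R) (hJ : time_set J)
  (G1 G2 : R -> R -> Y -> Y)
  (hG1 : inh_semigroup J G1) (hG2 : inh_semigroup J G2)
  (hreg1 : regular i J G1) (hreg2 : regular i J G2)
  (hA : forall (f : Y1) (t : R), J t ->
          generator J G1 t (i f) = generator J G2 t (i f)) :
  (forall (f : Y1) (s t : R), J s -> J t -> s <= t ->
      G1 s t (i f) = G2 s t (i f)) /\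
  (closure (range i) = setT ->
      forall (f : Y) (s t : R), J s -> J t -> s <= t -> G1 s t f = G2 s t f).
Proof.
have agree := regular_semigroups_agree hi_cont hJ hG1 hG2 hreg1 hreg2 hA.
split=> // dense f s t Js Jt st.
have [[lin1 _ _] [lin2 _ _]] := (hG1, hG2).
suff -> : G1 s t = G2 s t by [].
apply: continuous_eq_on_dense dense _.
- exact: (lin1 s t Js Jt st).2.
- exact: (lin2 s t Js Jt st).2.
- by move=> _ [y _ <-]; exact: agree.
Qed.
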